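(* If $g(t)^{-1}\log G(t)\to0$ as $t\to\infty$, then for all $c>0$, $\int_0^\infty e^{-cg(t)}\,\mathrm{d}t<\infty$.
   Context: The function $g:[0,\infty)\to(0,\infty)$ is $C^1$ and non-decreasing, and $G(t)=\int_0^tg(s)\,\mathrm{d}s$. *)

From Stdlib Require Import Reals.
From Coquelicot Require Import Coquelicot.
Open Scope R_scope.

Definition Gprim (g : R -> R) (t : R) : R := RInt g 0 t.

(* Since g is nondecreasing, G(t) >= g(0) t.  The hypothesis gives ln G(t) <= c g(t) / 2
   for large t, i.e. e^(-c g(t)) <= G(t)^(-2) <= (g(0) t)^(-2), which is integrable at
   infinity; a nonnegative function whose partial integrals stay bounded has an improper
   integral, by monotone convergence of those partial integrals. *)

From Stdlib Require Import Reals Lra Classical.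
From Coquelicot Require Import Coquelicot.
Open Scope R_scope.

Lemma is_lim_p_infty_incr_bounded (F : R -> R) (b K : R) :
  (forall x y, b <= x -> x <= y -> F x <= F y) ->
  (forall x, b <= x -> F x <= K) ->
  exists l : R, is_lim F p_infty l.
Proof.
  intros F_incr F_le.
  set (E := fun y => exists x, b <= x /\ y = F x).
  destruct (completeness E) as [l [l_ub l_lub]].
  - exists K. intros y [x [Hx ->]]. auto.
  - exists (F b), b. split; lra.
  - exists l. apply is_lim_spec. intros eps; simpl.
    destruct (classic (exists x0, b <= x0 /\ l - eps < F x0)) as [[x0 [Hx0 Hlt]] | Hnone].
    + exists x0. intros x Hx.
      assert (F x0 <= F x) by (apply F_incr; lra).
      assert (F x <= l) by (apply l_ub; exists x; split; [lra | reflexivity]).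
      apply Rabs_lt_between. destruct eps; simpl in *. lra.
    + assert (l <= l - eps).
      { apply l_lub. intros y [x [Hx ->]].
        apply Rnot_lt_le. intros Hlt. apply Hnone. exists x. auto. }
      destruct eps; simpl in *. lra.
Qed.

Lemma is_RInt_gen_p_infty_lim (f : R -> R) (b l : R) :
  (forall x, b <= x -> ex_RInt f b x) ->
  is_lim (RInt f b) p_infty l ->
  is_RInt_gen f (at_point b) (Rbar_locally p_infty) l.
Proof.
  intros f_int f_lim P HP.
  apply is_lim_spec in f_lim.
  destruct HP as [eps Heps].
  destruct (f_lim eps) as [M HM].
  apply Filter_prod with (eq b) (fun x => Rmax b M < x).
  - reflexivity.
  - exists (Rmax b M). auto.
  - intros a x Ha Hx. subst a. exists (RInt f b x). split.
    + apply (RInt_correct (V := R_CompleteNormedModule)), f_int. apply Rlt_le, Rle_lt_trans with (2 := Hx), Rmax_l.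
    + apply Heps, HM. apply Rle_lt_trans with (2 := Hx), Rmax_r.
Qed.

Lemma ex_RInt_gen_nonneg_bounded (f : R -> R) (b K : R) :
  (forall x, b <= x -> ex_RInt f b x) ->
  (forall x, b <= x -> 0 <= f x) ->
  (forall x, b <= x -> RInt f b x <= K) ->
  ex_RInt_gen f (at_point b) (Rbar_locally p_infty).
Proof.
  intros f_int f_ge0 f_bnd.
  assert (F_incr : forall x y, b <= x -> x <= y -> RInt f b x <= RInt f b y).
  { intros x y Hx Hxy.
    assert (f_int_xy : ex_RInt f x y) by (apply (ex_RInt_Chasles_2 (V := R_CompleteNormedModule)) with b; [lra | apply f_int; lra]).
    rewrite <- (RInt_Chasles (V := R_CompleteNormedModule) f b x y (f_int x Hx) f_int_xy).
    assert (0 <= RInt f x y) by (apply RInt_ge_0; auto; intros z Hz; apply f_ge0; lra).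
    unfold plus; simpl. lra. }
  destruct (is_lim_p_infty_incr_bounded (RInt f b) b K F_incr f_bnd) as [l Hl].
  exists l. apply is_RInt_gen_p_infty_lim; auto.
Qed.

Lemma ex_RInt_gen_dominated_inv_sqr (f : R -> R) (b K : R) : 0 < b ->
  (forall x, b <= x -> ex_RInt f b x) ->
  (forall x, b <= x -> 0 <= f x <= K / (x * x)) ->
  ex_RInt_gen f (at_point b) (Rbar_locally p_infty).
Proof.
  intros Hb f_int f_dom.
  assert (K_ge0 : 0 <= K).
  { destruct (f_dom b (Rle_refl b)) as [H0 H1].
    apply Rmult_le_reg_r with (/ (b * b)); [apply Rinv_0_lt_compat; nra | lra]. }
  apply ex_RInt_gen_nonneg_bounded with (K / b).
  - exact f_int.
  - intros x Hx. apply f_dom, Hx.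
  - intros x Hx.
    assert (dom_RInt : is_RInt (fun t => K / (t * t)) b x (K / b - K / x)).
    { replace (K / b - K / x) with (minus (- K / x) (- K / b))
        by (unfold minus, plus, opp; simpl; field; lra).
      apply (is_RInt_derive (V := R_CompleteNormedModule) (fun t => - K / t));
        intros t Ht; rewrite Rmin_left in Ht by lra.
      - auto_derive; [lra | field; lra].
      - apply (ex_derive_continuous (V := R_NormedModule)). auto_derive. nra. }
    assert (RInt f b x <= K / b - K / x).
    { rewrite <- (is_RInt_unique _ _ _ _ dom_RInt).
      apply RInt_le; auto.
      - eexists. exact dom_RInt.
      - intros t Ht. apply f_dom. lra. }
    assert (0 <= K / x) by (apply Rmult_le_pos; [lra | apply Rlt_le, Rinv_0_lt_compat; lra]).
    lra.
Qed.

Lemma is_lim_ratio_0_eventually_le (u v : R -> R) (eps : R) :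
  0 < eps ->
  (forall t, 0 <= t -> 0 < v t) ->
  is_lim (fun t => u t / v t) p_infty 0 ->
  exists M, forall t, M < t -> u t <= eps * v t.
Proof.
  intros Heps v_pos uv_lim.
  apply is_lim_spec in uv_lim.
  destruct (uv_lim (mkposreal eps Heps)) as [M HM]; simpl in HM.
  exists (Rmax 0 M). intros t Ht.
  assert (Hv : 0 < v t) by (apply v_pos, Rlt_le, Rle_lt_trans with (2 := Ht), Rmax_l).
  specialize (HM t (Rle_lt_trans _ _ _ (Rmax_r 0 M) Ht)).
  rewrite Rminus_0_r in HM. apply Rabs_lt_between in HM.
  apply Rmult_le_reg_r with (/ v t); [apply Rinv_0_lt_compat, Hv |].
  rewrite Rmult_assoc, Rinv_r by lra. unfold Rdiv in HM. lra.
Qed.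

Lemma exp_opp_le_inv_sqr (x y : R) : 0 < y -> 2 * ln y <= x -> exp (- x) <= / (y * y).
Proof.
  intros Hy Hxy.
  replace (/ (y * y)) with (exp (- (2 * ln y))).
  - destruct (Rle_lt_or_eq_dec _ _ Hxy) as [Hlt | ->]; [apply Rlt_le, exp_increasing; lra | lra].
  - rewrite exp_Ropp. f_equal.
    replace (2 * ln y) with (ln y + ln y) by ring.
    rewrite exp_plus, exp_ln; auto.
Qed.

Section Integrand.

Variable g : R -> R.
Hypothesis g_cont : forall t, 0 <= t -> continuous g t.
Hypothesis g_pos : forall t, 0 <= t -> 0 < g t.
Hypothesis g_mono : forall s t, 0 <= s -> s <= t -> g s <= g t.

Lemma Gprim_ge_linear (t : R) : 0 <= t -> g 0 * t <= Gprim g t.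
Proof.
  intros Ht. unfold Gprim.
  replace (g 0 * t) with (RInt (fun _ => g 0) 0 t)
    by (rewrite RInt_const; unfold scal; simpl; unfold mult; simpl; ring).
  apply RInt_le; auto.
  - apply ex_RInt_const.
  - apply (ex_RInt_continuous (V := R_CompleteNormedModule)).
    intros z Hz. rewrite Rmin_left in Hz by lra. apply g_cont. lra.
  - intros x Hx. apply g_mono; lra.
Qed.

Lemma exp_opp_mul_le_inv_sqr (c t : R) : 0 < t ->
  2 * ln (Gprim g t) <= c * g t ->
  exp (- (c * g t)) <= / (g 0 * g 0) / (t * t).
Proof.
  intros Ht Hln.
  assert (Hg0 : 0 < g 0) by (apply g_pos; lra).
  assert (HG : g 0 * t <= Gprim g t) by (apply Gprim_ge_linear; lra).
  assert (Hg0t : 0 < g 0 * t) by (apply Rmult_lt_0_compat; lra).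
  apply Rle_trans with (/ (Gprim g t * Gprim g t)).
  - apply exp_opp_le_inv_sqr; lra.
  - replace (/ (g 0 * g 0) / (t * t)) with (/ ((g 0 * t) * (g 0 * t))) by (field; lra).
    apply Rinv_le_contravar; [nra | apply Rmult_le_compat; lra].
Qed.

End Integrand.

Theorem mainTheorem18 (g : R -> R)
  (g_pos : forall t, 0 <= t -> 0 < g t)
  (g_C1 : forall t, 0 <= t -> ex_derive g t /\ continuous (Derive g) t)
  (g_mono : forall s t, 0 <= s -> s <= t -> g s <= g t)
  (hlim : is_lim (fun t => ln (Gprim g t) / g t) p_infty 0) :
  forall c : R, 0 < c ->
    ex_RInt_gen (fun t => exp (- (c * g t))) (at_point 0) (Rbar_locally p_infty).
Proof.
  intros c Hc.
  assert (g_cont : forall t, 0 <= t -> continuous g t)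
    by (intros t Ht; apply (ex_derive_continuous (V := R_NormedModule)), g_C1, Ht).
  assert (f_int : forall a x, 0 <= a -> a <= x -> ex_RInt (fun t => exp (- (c * g t))) a x).
  { intros a x Ha Hax. apply (ex_RInt_continuous (V := R_CompleteNormedModule)).
    intros z Hz. rewrite Rmin_left in Hz by lra.
    apply (continuous_comp g (fun y => exp (- (c * y)))); [apply g_cont; lra |].
    apply (ex_derive_continuous (V := R_NormedModule)). auto_derive. auto. }
  destruct (is_lim_ratio_0_eventually_le (fun t => ln (Gprim g t)) g (c / 2))
    as [M HM]; [lra | exact g_pos | exact hlim |].
  set (b := Rmax 1 (M + 1)).
  assert (Hb1 : 1 <= b) by apply Rmax_l.
  assert (HbM : M + 1 <= b) by apply Rmax_r.
  apply ex_RInt_gen_Chasles with b.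
  - apply (ex_RInt_gen_at_point (V := R_CompleteNormedModule)), f_int; lra.
  - apply ex_RInt_gen_dominated_inv_sqr with (/ (g 0 * g 0)); [lra | intros x Hx; apply f_int; lra |].
    intros x Hx. split; [apply Rlt_le, exp_pos |].
    apply exp_opp_mul_le_inv_sqr; auto; [lra |].
    specialize (HM x ltac:(lra)). lra.
Qed.
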